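(* Let $y,l,u\in\mathcal{R}(\mathbb{R}^{+},\mathbb{R})$ be such that $l\leq u$, $l_0\leq y_0\leq u_0$, and $\inf_{s\leq t}(u_s-l_s)>0$ for every $t\geq 0$. Let $(\xi,\kappa)=RP_l(y)$. Then the function $\Theta^u_l(\xi)$ has bounded variation.
   Context: A function $f:\mathbb{R}^+=[0,\infty)\to\mathbb{R}$ is regulated if it has a left limit $f_{t^-}$ at every $t>0$ and a right limit $f_{t^+}$ at every $t\geq0$; $\mathcal{R}(\mathbb{R}^{+},\mathbb{R})$ is the set of regulated functions. $a\wedge b=\min(a,b)$, $a\vee b=\max(a,b)$, $a^+=a\vee0$. A function has bounded variation if it has finite total variation on every interval $[0,t]$. One-barrier problem $RP_l(y)$ (for $y,l$ regulated with $y_0\geq l_0$): the unique pair $(\xi,\kappa)$ with $\xi=y+\kappa\geq l$, $\kappa$ non-decreasing, right-continuous, $\kappa_0=0$, and $\int_{[0,\infty[}(\xi_s-l_s)\wedge(\xi_{s^+}-l_{s^+})\,d\kappa_s=0$; explicitly $\kappa_t=-\inf_{s\leq t}\big((y_s-l_s)\wedge(y_{s^+}-l_{s^+})\wedge0\big)$. For $f$ regulated: $\Theta^{u}_{l}(f)_t=\sup_{s\leq t}\Big(\big((f_s-u_s)\vee(f_{s^+}-u_{s^+})\big)^+\wedge\inf_{s\leq r\leq t}\big[\big((f_r-l_r)\wedge(f_{r^+}-l_{r^+})\big)\vee(f_r-u_r)\big]\Big)$. *)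

(* Functions on R^+ = [0,oo) are modelled as
   f : R -> R, only values on [0,oo) are ever used. *)
From HB Require Import structures.
From mathcomp Require Import all_boot all_order all_algebra.
From mathcomp Require Import all_classical all_reals all_analysis.
Set Implicit Arguments. Unset Strict Implicit. Unset Printing Implicit Defensive.
Import Order.TTheory GRing.Theory Num.Theory numFieldNormedType.Exports.
Local Open Scope classical_set_scope.
Local Open Scope ring_scope.

Section Defs.
Variable R : realType.

Definition regulated (f : R -> R) : Prop :=
  (forall t : R, 0 < t -> exists L : R, f x @[x --> t^'-] --> L) /\
  (forall t : R, 0 <= t -> exists L : R, f x @[x --> t^'+] --> L).

Definition rlim (f : R -> R) (t : R) : R := lim (f x @[x --> t^'+]).

Definition RP_kappa (y l : R -> R) (t : R) : R :=
  - inf [set Num.min (Num.min (y s - l s) (rlim y s - rlim l s)) 0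
        | s in `[0, t]].

Definition RP_xi (y l : R -> R) (t : R) : R := y t + RP_kappa y l t.

Definition Theta (u l f : R -> R) (t : R) : R :=
  sup [set Num.min
          (Num.max (Num.max (f s - u s) (rlim f s - rlim u s)) 0)
          (inf [set Num.max
                   (Num.min (f r - l r) (rlim f r - rlim l r)) (f r - u r)
               | r in `[s, t]])
      | s in `[0, t]].

Definition has_BV (f : R -> R) : Prop :=
  forall t : R, 0 <= t -> bounded_variation 0 t f.

End Defs.

From HB Require Import structures.
From mathcomp Require Import all_boot all_order all_algebra.
From mathcomp Require Import all_classical all_reals all_analysis.
From mathcomp Require Import lra.

(* Let h = f - l >= 0 (for f = xi this is what kappa is built for) and let
   delta = inf_[0,T] (u - l) > 0.  On an interval where h oscillates by less
   than delta/3, Theta^u_l(f) has no strict interior dip: a dip at q between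
   p < q < r would need a time in ]q, r] where f - u (or its right limit)
   exceeds Theta_q, and a time in ]p, q] where min(h, h_+) is below
   Theta_q + delta/3, which is impossible since u - l >= delta there.  A bounded
   function without interior dips is unimodal, so its variation on such an
   interval is at most 8 sup |Theta|.  As h is regulated, every point of [0,T]
   has one-sided neighbourhoods of small oscillation, and real induction glues
   them into bounded variation on [0,T]. *)

Set Implicit Arguments.
Unset Strict Implicit.
Unset Printing Implicit Defensive.

Import Order.TTheory GRing.Theory Num.Theory numFieldNormedType.Exports.
Local Open Scope classical_set_scope.
Local Open Scope ring_scope.

Section real_preliminaries.
Context {R : realType}.
Implicit Types (A : set R) (g : R -> R).

Lemma near_at_right_itv (x : R) (P : R -> Prop) : (\forall z \near x^'+, P z) ->
  exists2 d : R, 0 < d & forall z, x < z < x + d -> P z.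
Proof.
move=> /nbhs_ballP[d d0 xdP]; exists d => // z /andP[xz zd]; apply: xdP => //.
by rewrite /ball /= ltr_distlC; apply/andP; split; lra.
Qed.

Lemma near_at_left_itv (x : R) (P : R -> Prop) : (\forall z \near x^'-, P z) ->
  exists2 d : R, 0 < d & forall z, x - d < z < x -> P z.
Proof.
move=> /nbhs_ballP[d d0 xdP]; exists d => // z /andP[xz zd]; apply: xdP => //.
by rewrite /ball /= ltr_distlC; apply/andP; split; lra.
Qed.

Lemma ge_inf_img A g B x : (forall s, A s -> B <= g s) -> A x ->
  inf [set g s | s in A] <= g x.
Proof.
by move=> gB Ax; apply: ge_inf; [exists B => _ [s As <-]; exact: gB | exists x].
Qed.

Lemma lb_le_inf_img A g B x : A x -> (forall s, A s -> B <= g s) ->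
  B <= inf [set g s | s in A].
Proof.
by move=> Ax gB; apply: lb_le_inf; [exists (g x), x | move=> _ [s As <-]; exact: gB].
Qed.

Lemma le_inf_img_subset A A' g B x : A `<=` A' -> A x ->
  (forall s, A' s -> B <= g s) ->
  inf [set g s | s in A'] <= inf [set g s | s in A].
Proof.
move=> AA' Ax gB; apply: lb_le_inf_img Ax _ => s As.
by apply: ge_inf_img gB _; exact: AA'.
Qed.

Lemma ub_le_sup_img A g B x : (forall s, A s -> g s <= B) -> A x ->
  g x <= sup [set g s | s in A].
Proof.
by move=> gB Ax; apply: ub_le_sup; [exists B => _ [s As <-]; exact: gB | exists x].
Qed.

Lemma ge_sup_img A g B x : A x -> (forall s, A s -> g s <= B) ->
  sup [set g s | s in A] <= B.
Proof.
by move=> Ax gB; apply: ge_sup; [exists (g x), x | move=> _ [s As <-]; exact: gB].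
Qed.

Lemma sup_img_gt A g c x : A x -> c < sup [set g s | s in A] ->
  exists2 s, A s & c < g s.
Proof.
by move=> Ax /sup_gt[|_ [s As <-] cgs]; [exists (g x), x | exists s].
Qed.

Lemma inf_img_lt A g c x : A x -> inf [set g s | s in A] < c ->
  exists2 s, A s & g s < c.
Proof.
by move=> Ax /inf_lt[|_ [s As <-] gsc]; [exists (g x), x | exists s].
Qed.

Lemma segment_induction (P : R -> R -> Prop) (T : R) : 0 <= T ->
  (forall a b c, a <= b -> b <= c -> P a b -> P b c -> P a c) ->
  (forall x, 0 <= x <= T -> exists2 e, 0 < e &
     forall b, x <= b < x + e -> b <= T -> P x b) ->
  (forall x, 0 < x <= T -> exists2 e, 0 < e &
     forall a, 0 <= a -> x - e < a <= x -> P a x) ->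
  P 0 T.
Proof.
move=> T0 Ptrans Pright Pleft.
pose S := [set x | 0 <= x <= T /\ P 0 x].
have S0 : S 0.
  split; first by rewrite lexx.
  have [|e e0 P0] := Pright 0; first by rewrite lexx.
  by apply: P0; rewrite ?lexx ?add0r.
have supS : has_sup S by split; [exists 0 | exists T => x [/andP[]]].
have le_supS x : S x -> x <= sup S by apply: ub_le_sup; case: supS.
set c := sup S in le_supS *.
have c0 : 0 <= c := le_supS 0 S0.
have cT : c <= T by apply: ge_sup; [exists 0 | move=> x [/andP[]]].
have P0c : P 0 c.
  have [->|c_neq0] := eqVneq c 0; first by case: S0.
  have [|e e0 Pe] := Pleft c; first by rewrite lt_def c_neq0 c0 cT.
  have [z Sz cz] := sup_adherent e0 supS; have [/andP[z0 _] P0z] := Sz.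
  by apply: Ptrans P0z (Pe _ z0 _); rewrite ?le_supS ?cz.
have [cT'|Tc] := ltP c T; last by have -> : T = c by apply/le_anti; rewrite Tc cT.
have [|e e0 Pe] := Pright c; first by rewrite c0 cT.
pose w := Num.min (c + e / 2) T.
have cw : c < w by rewrite lt_min cT' andbT; lra.
have : S w.
  split; first by rewrite (le_trans c0 (ltW cw)) ge_min lexx orbT.
  apply: Ptrans P0c (Pe w _ _); rewrite ?(ltW cw) ?ge_min ?lexx ?orbT //=.
  by rewrite gt_min; apply/orP; left; lra.
by move/le_supS; rewrite leNgt cw.
Qed.

Lemma bounded_variation_cat (a b c : R) (f : R -> R) : a <= b -> b <= c ->
  bounded_variation a b f -> bounded_variation b c f -> bounded_variation a c f.
Proof.
move=> ab bc /(bounded_variationP _ ab) abf /(bounded_variationP _ bc) bcf.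
apply/bounded_variationP; first exact: le_trans ab bc.
by rewrite (total_variationD _ ab bc) fin_numD abf bcf.
Qed.

Lemma variation_cons (a b x : R) (f : R -> R) s :
  variation a b f (x :: s) = `|f x - f a| + variation x b f s.
Proof. by rewrite /variation /= big_nat_recl. Qed.

Lemma variation_rcons (a b z : R) (f : R -> R) s :
  variation a b f (rcons s z) = variation a b f s + `|f z - f (last a s)|.
Proof.
elim: s a => [|x s IHs] a /=; first by rewrite variation_cons !variation_nil add0r addr0.
by rewrite !variation_cons IHs addrA.
Qed.

Lemma path_le_last (x : R) s : path <%R x s -> x <= last x s.
Proof. by elim: s x => //= y s IHs x /andP[xy /IHs]; exact/le_trans/ltW. Qed.

Section quasiconcave.
Variables (F : R -> R) (a b : R).
Hypothesis F_qc : forall p q r, a < p -> p < q -> q < r -> r < b ->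
  Num.min (F p) (F r) <= F q.

Lemma quasiconcave_variation_le c x s K : a < x -> path <%R x s -> last x s < b ->
  (forall z, x <= z < b -> F z <= K) ->
  variation x c F s <= 2 * K - F x - F (last x s).
Proof.
elim: s x K => [|y s IHs] x K ax /=.
  by move=> _ xb /(_ x); rewrite variation_nil lexx xb => /(_ isT); lra.
move=> /andP[xy ys] lb FK; rewrite variation_cons.
have ay := lt_trans ax xy; have yb := le_lt_trans (path_le_last ys) lb.
have [Fxy|Fyx] := leP (F x) (F y).
  have FK' z : y <= z < b -> F z <= K.
    by move=> /andP[yz zb]; apply: FK; rewrite zb (le_trans (ltW xy) yz).
  by have := IHs y K ay ys lb FK'; rewrite ger0_norm ?subr_ge0 //; lra.
have FxK : F x <= K by apply: FK; rewrite lexx (lt_trans xy yb).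
have Fy_max z : y <= z < b -> F z <= F y.
  move=> /andP[]; rewrite le_eqVlt => /predU1P[<-//|yz zb].
  by have := F_qc ax xy yz zb; rewrite ge_min leNgt Fyx.
have := IHs y (F y) ay ys lb Fy_max.
by rewrite ltr0_norm ?subr_lt0 //; lra.
Qed.

Lemma quasiconcave_bounded_variation (M : R) : a < b ->
  (forall z, a <= z <= b -> `|F z| <= M) -> bounded_variation a b F.
Proof.
move=> ab FM; have {}FM z : a <= z <= b -> - M <= F z <= M.
  by move=> /FM; rewrite ler_norml.
have FB p q : a <= p <= b -> a <= q <= b -> `|F p - F q| <= 2 * M.
  by move=> /FM/andP[? ?] /FM/andP[? ?]; rewrite ler_norml; apply/andP; split; lra.
have aab : a <= a <= b by rewrite lexx ltW.
have bab : a <= b <= b by rewrite lexx ltW.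
have M0 : 0 <= M by have /andP[] := FM a aab; lra.
exists (8 * M) => _ [s [abs /eqP sb] <-].
case/lastP: s abs sb => [|s z] abs; first by rewrite variation_nil; lra.
rewrite last_rcons => zb; subst z.
move: abs; rewrite rcons_path variation_rcons => /andP[].
case: s => [_ _|x s /= /andP[ax xs] lb].
  by rewrite variation_nil add0r; have := FB b a bab aab; lra.
have xl := path_le_last xs; have xb := le_lt_trans xl lb.
have in_ab z : x <= z < b -> a <= z <= b.
  by move=> /andP[xz zb]; rewrite ltW ?(lt_le_trans ax xz) ?ltW.
have xab : a <= x <= b by apply: in_ab; rewrite lexx.
have lab : a <= last x s <= b by apply: in_ab; rewrite xl.
have FxM z : x <= z < b -> F z <= M by move=> /in_ab/FM/andP[].
have := quasiconcave_variation_le b ax xs lb FxM.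
have := FM x xab; have := FM _ lab; have := FB x a xab aab; have := FB b _ bab lab.
rewrite variation_cons => ? ? /andP[? ?] /andP[? ?] ?; lra.
Qed.

End quasiconcave.

End real_preliminaries.

Section regulated.
Context {R : realType}.
Implicit Types f g : R -> R.

Lemma regulated_cvgr f t : regulated f -> 0 <= t -> cvg (f x @[x --> t^'+]).
Proof. by move=> [_ fr] /fr fL; apply/cvg_ex. Qed.

Lemma regulatedD f g : regulated f -> regulated g -> regulated (f \+ g).
Proof.
move=> [fl fr] [gl gr]; split=> t t0.
  by have [[L fL] [L' gL]] := (fl t t0, gl t t0); exists (L + L'); exact: cvgD.
by have [[L fL] [L' gL]] := (fr t t0, gr t t0); exists (L + L'); exact: cvgD.
Qed.

Lemma regulatedB f g : regulated f -> regulated g -> regulated (f \- g).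
Proof.
move=> [fl fr] [gl gr]; split=> t t0.
  by have [[L fL] [L' gL]] := (fl t t0, gl t t0); exists (L - L'); exact: cvgB.
by have [[L fL] [L' gL]] := (fr t t0, gr t t0); exists (L - L'); exact: cvgB.
Qed.

Lemma nondecreasing_regulated f :
  {in `[0, +oo[ &, nondecreasing_fun f} -> regulated f.
Proof.
move=> ndf; split=> t t0; apply/cvg_ex.
  apply: nondecreasing_at_left_is_cvgr.
    near=> b; have b0 : 0 < b by near: b; exact: nbhs_left_gt.
    move=> p q; rewrite !in_itv /= => /andP[bp _] /andP[bq _].
    by apply: ndf; rewrite in_itv /= andbT; apply/ltW/(lt_trans b0).
  near=> b; have b0 : 0 < b by near: b; exact: nbhs_left_gt.
  exists (f t) => w [z]; rewrite /= in_itv /= => /andP[bz zt] <-.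
  by apply: ndf; rewrite ?in_itv /= ?andbT ?(ltW zt) //; apply/ltW/(lt_trans b0).
apply: nondecreasing_at_right_is_cvgr.
  near=> b => p q; rewrite !in_itv /= => /andP[tp _] /andP[tq _].
  by apply: ndf; rewrite in_itv /= andbT; apply/ltW/(le_lt_trans t0).
near=> b; exists (f t) => w [z]; rewrite /= in_itv /= => /andP[tz _] <-.
by apply: ndf; rewrite ?in_itv /= ?andbT ?(ltW tz) //; apply/ltW/(le_lt_trans t0).
Unshelve. all: by end_near.
Qed.

Lemma rlimB f g t : regulated f -> regulated g -> 0 <= t ->
  rlim (f \- g) t = rlim f t - rlim g t.
Proof. by move=> rf rg t0; apply: limB; exact: regulated_cvgr. Qed.

Lemma regulated_bounded f T : regulated f -> 0 <= T ->
  exists B, forall x, 0 <= x <= T -> `|f x| <= B.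
Proof.
move=> [fl fr] T0.
pose P a b := exists B, forall z, a <= z <= b -> `|f z| <= B.
suff [B fB] : P 0 T by exists B.
apply: segment_induction => //
  [a b c ab bc [B1 fB1] [B2 fB2]|x /andP[x0 _]|x /andP[x0 _]].
- exists (Num.max B1 B2) => z /andP[az zc]; rewrite le_max.
  by have [zb|bz] := leP z b; [rewrite fB1 ?az | rewrite fB2 ?orbT ?zc ?ltW].
- have [L fL] := fr x x0.
  have /near_at_right_itv[d d0 fd] : \forall z \near x^'+, `|f z| <= `|L| + 1.
    by apply: (cvgr_norm_le L fL); rewrite ltrDl.
  exists d => // b /andP[xb bd] _; exists (Num.max `|f x| (`|L| + 1)) => z /andP[xz zb].
  rewrite le_max; have [<-|zx] := eqVneq x z; first by rewrite lexx.
  by rewrite fd ?orbT // lt_def eq_sym zx xz (le_lt_trans zb bd).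
- have [L fL] := fl x x0.
  have /near_at_left_itv[d d0 fd] : \forall z \near x^'-, `|f z| <= `|L| + 1.
    by apply: (cvgr_norm_le L fL); rewrite ltrDl.
  exists d => // a _ /andP[ad ax]; exists (Num.max `|f x| (`|L| + 1)) => z /andP[az zx].
  rewrite le_max; have [->|zx'] := eqVneq z x; first by rewrite lexx.
  by rewrite fd ?orbT // (lt_le_trans ad az) lt_def eq_sym zx' zx.
Qed.

Lemma regulated_bounded_rlim f T : regulated f -> 0 <= T ->
  exists B, forall x, 0 <= x <= T -> `|f x| <= B /\ `|rlim f x| <= B.
Proof.
move=> rf T0; have [|B fB] := regulated_bounded (T := T + 1) rf; first lra.
exists B => x /andP[x0 xT]; split; first by apply: fB; rewrite x0; lra.
rewrite /rlim -lim_norm; last exact: regulated_cvgr.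
apply: limr_le; first by apply: is_cvg_norm; exact: regulated_cvgr.
near=> z; apply: fB; apply/andP; split.
  by apply: le_trans x0 (ltW _); near: z; exact: nbhs_right_gt.
by apply: ltW; near: z; apply: nbhs_right_lt; lra.
Unshelve. all: by end_near.
Qed.

End regulated.

Section Skorokhod_problem.
Context {R : realType}.
Variables y l : R -> R.
Hypotheses (ry : regulated y) (rl : regulated l).

Let undershoot s := Num.min (Num.min (y s - l s) (rlim y s - rlim l s)) 0.

Let undershoot_lbound t : 0 <= t ->
  exists C, forall s, [set` `[0, t]] s -> - C <= undershoot s.
Proof.
move=> t0; have [C HC] := regulated_bounded_rlim (regulatedB ry rl) t0.
exists C => s; rewrite /= in_itv /= => /[dup] /andP[s0 _] /HC[].
rewrite /= rlimB // !ler_norml /undershoot => /andP[? ?] /andP[? ?].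
by rewrite !le_min; apply/andP; split; [apply/andP; split|]; lra.
Qed.

Let RP_kappa_ge t : 0 <= t -> - undershoot t <= RP_kappa y l t.
Proof.
move=> t0; have [C HC] := undershoot_lbound t0.
by rewrite lerN2; apply: (ge_inf_img HC); rewrite /= in_itv /= t0 lexx.
Qed.

Lemma RP_kappa_nondecreasing :
  {in `[0, +oo[ &, nondecreasing_fun (RP_kappa y l)}.
Proof.
move=> s t; rewrite !in_itv /= !andbT => s0 t0 st.
have [C HC] := undershoot_lbound t0.
rewrite lerN2; apply: (le_inf_img_subset (x := s) _ _ HC) => [z|].
  by rewrite /= !in_itv /= => /andP[-> zs]; exact: le_trans zs st.
by rewrite /= in_itv /= s0 lexx.
Qed.

Lemma RP_xi_ge t : 0 <= t -> l t <= RP_xi y l t.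
Proof.
move=> t0; have := RP_kappa_ge t0.
have : undershoot t <= y t - l t by rewrite !ge_min lexx.
by rewrite /RP_xi; lra.
Qed.

Lemma RP_xi_regulated : regulated (RP_xi y l).
Proof. exact: regulatedD ry (nondecreasing_regulated RP_kappa_nondecreasing). Qed.

End Skorokhod_problem.

Section Theta.
Context {R : realType}.
Variables f l u : R -> R.
Hypotheses (rf : regulated f) (rl : regulated l) (ru : regulated u).
Hypothesis l_le_f : forall t, 0 <= t -> l t <= f t.

Let A s := Num.max (Num.max (f s - u s) (rlim f s - rlim u s)) 0.
Let G r := Num.max (Num.min (f r - l r) (rlim f r - rlim l r)) (f r - u r).
Let m s t := inf [set G r | r in `[s, t]].
Let phi s t := Num.min (A s) (m s t).

Let rlim_subr_ge0 r : 0 <= r -> 0 <= rlim f r - rlim l r.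
Proof.
move=> r0; rewrite -rlimB //; apply: limr_ge; first exact/regulated_cvgr/r0/regulatedB.
near=> z; rewrite /= subr_ge0; apply/l_le_f/(le_trans r0)/ltW.
by near: z; exact: nbhs_right_gt.
Unshelve. all: by end_near.
Qed.

Let G_ge0 r : 0 <= r -> 0 <= G r.
Proof. by move=> r0; rewrite le_max le_min subr_ge0 l_le_f // rlim_subr_ge0. Qed.

Let m_le s t r : 0 <= s -> s <= r <= t -> m s t <= G r.
Proof.
move=> s0 srt; apply: (ge_inf_img (B := 0)); last by rewrite /= in_itv.
by move=> z; rewrite /= in_itv /= => /andP[sz _]; apply/G_ge0/(le_trans s0).
Qed.

Let m_ge0 s t : 0 <= s <= t -> 0 <= m s t.
Proof.
move=> /andP[s0 st]; apply: (lb_le_inf_img (x := s)); first by rewrite /= in_itv /= lexx.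
by move=> z; rewrite /= in_itv /= => /andP[sz _]; apply/G_ge0/(le_trans s0).
Qed.

Let m_antitone s t t' : 0 <= s <= t -> t <= t' -> m s t' <= m s t.
Proof.
move=> /andP[s0 st] tt'; apply: (le_inf_img_subset (x := s) (B := 0)).
- by move=> z; rewrite /= !in_itv /= => /andP[-> zt]; exact: le_trans tt'.
- by rewrite /= in_itv /= lexx.
- by move=> z; rewrite /= in_itv /= => /andP[sz _]; apply/G_ge0/(le_trans s0).
Qed.

Section on_segment.
Variables (T M delta : R).
Hypothesis A_le : forall s, 0 <= s <= T -> A s <= M.
Hypothesis delta_gt0 : 0 < delta.
Hypothesis delta_le : forall s, 0 <= s <= T -> delta <= u s - l s.

Let Theta_ge_phi s t : 0 <= s <= t -> t <= T -> phi s t <= Theta u l f t.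
Proof.
move=> /andP[s0 st] tT.
apply: (ub_le_sup_img (g := phi^~ t) (B := M)); last by rewrite /= in_itv /= s0.
move=> z; rewrite /= in_itv /= => /andP[z0 zt]; rewrite ge_min A_le //.
by rewrite z0 (le_trans zt tT).
Qed.

Let Theta_le t : 0 <= t <= T -> Theta u l f t <= M.
Proof.
move=> /andP[t0 tT].
apply: (ge_sup_img (g := phi^~ t) (x := t)); first by rewrite /= in_itv /= t0 lexx.
move=> z; rewrite /= in_itv /= => /andP[z0 zt]; rewrite ge_min A_le //.
by rewrite z0 (le_trans zt tT).
Qed.

Let Theta_ge0 t : 0 <= t <= T -> 0 <= Theta u l f t.
Proof.
move=> /andP[t0 tT]; have ttt : 0 <= t <= t by rewrite t0 lexx.
by apply: le_trans (Theta_ge_phi ttt tT); rewrite le_min le_max lexx orbT m_ge0.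
Qed.

Let Theta_gt t c : 0 <= t -> c < Theta u l f t -> exists2 s, 0 <= s <= t & c < phi s t.
Proof.
move=> t0 ct; have [|s] := sup_img_gt (g := phi^~ t) (x := t) _ ct.
  by rewrite /= in_itv /= t0 lexx.
by rewrite /= in_itv /= => st cs; exists s.
Qed.

Let Theta_rise t t' : 0 <= t <= t' -> t' <= T -> Theta u l f t < Theta u l f t' ->
  exists2 s, t < s <= t' & Theta u l f t < A s.
Proof.
move=> /andP[t0 tt'] t'T /(Theta_gt (le_trans t0 tt'))[s /andP[s0 st'] lt_phi].
have [st|ts] := leP s t; last first.
  by exists s; rewrite ?ts ?st' //; apply: lt_le_trans lt_phi _; rewrite ge_min lexx.
have : phi s t' <= phi s t by rewrite le_min ge_min lexx ge_min m_antitone ?s0 ?orbT.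
have : phi s t <= Theta u l f t.
  by apply: Theta_ge_phi; rewrite ?s0 ?st ?(le_trans tt' t'T).
lra.
Qed.

Let Theta_fall t t' e : 0 <= t <= t' -> t' <= T -> Theta u l f t' < Theta u l f t ->
  0 < e -> exists2 r, t < r <= t' & G r < Theta u l f t' + e.
Proof.
move=> /andP[t0 tt'] t'T /(Theta_gt t0)[s /andP[s0 st]].
rewrite lt_min => /andP[lt_As lt_m] e0.
have m_le_Theta : m s t' <= Theta u l f t'.
  rewrite leNgt; apply/negP => lt_m'.
  have : phi s t' <= Theta u l f t'.
    by apply: Theta_ge_phi; rewrite ?s0 ?(le_trans st tt').
  by rewrite leNgt lt_min lt_As lt_m'.
pose e' := Num.min e (m s t - Theta u l f t').
have m_lt : m s t' < Theta u l f t' + e'.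
  by apply: le_lt_trans m_le_Theta _; rewrite ltrDl lt_min e0 subr_gt0.
have [|r] := inf_img_lt (g := G) (x := s) _ m_lt.
  by rewrite /= in_itv /= lexx (le_trans st tt').
rewrite /= in_itv /= => /andP[sr rt'] lt_Gr; exists r; last first.
  by apply: lt_le_trans lt_Gr _; rewrite lerD2l ge_min lexx.
rewrite rt' andbT ltNge; apply/negP => rt.
have : m s t <= G r by apply: m_le; rewrite ?sr.
have : e' <= m s t - Theta u l f t' by rewrite ge_min lexx orbT.
lra.
Qed.

Let delta_le_rlim s : 0 <= s -> s < T -> delta <= rlim u s - rlim l s.
Proof.
move=> s0 sT; rewrite -rlimB //; apply: limr_ge; first exact/regulated_cvgr/s0/regulatedB.
near=> z; apply: delta_le; apply/andP; split.
  by apply/(le_trans s0)/ltW; near: z; exact: nbhs_right_gt.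
by apply/ltW; near: z; exact: nbhs_right_lt.
Unshelve. all: by end_near.
Qed.

Let small_osc a b := forall z w, a < z < b -> a < w < b ->
  `|(f z - l z) - (f w - l w)| < delta / 3.

Let small_osc_sub a b a' b' : a <= a' -> b' <= b -> small_osc a b -> small_osc a' b'.
Proof.
move=> aa' b'b osc z w /andP[az zb] /andP[aw wb]; apply: osc.
  by rewrite (le_lt_trans aa' az) (lt_le_trans zb b'b).
by rewrite (le_lt_trans aa' aw) (lt_le_trans wb b'b).
Qed.

Let small_osc_right x : 0 <= x -> exists2 e, 0 < e & small_osc x (x + e).
Proof.
move=> x0; have [L hL] := (regulatedB rf rl).2 x x0.
have /near_at_right_itv[e e0 he] : \forall z \near x^'+, `|(f z - l z) - L| < delta / 6.
  by apply: cvgr_distC_lt hL _ _; have := delta_gt0; lra.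
exists e => // z w zin win.
have := he z zin; have := he w win.
by rewrite /= !ltr_distlC => /andP[? ?] /andP[? ?]; apply/andP; split; lra.
Qed.

Let small_osc_left x : 0 < x -> exists2 e, 0 < e & small_osc (x - e) x.
Proof.
move=> x0; have [L hL] := (regulatedB rf rl).1 x x0.
have /near_at_left_itv[e e0 he] : \forall z \near x^'-, `|(f z - l z) - L| < delta / 6.
  by apply: cvgr_distC_lt hL _ _; have := delta_gt0; lra.
exists e => // z w zin win.
have := he z zin; have := he w win.
by rewrite /= !ltr_distlC => /andP[? ?] /andP[? ?]; apply/andP; split; lra.
Qed.

Let small_osc_rlim a b x c : small_osc a b -> 0 <= a -> a < x < b -> a < c < b ->
  f c - l c - delta / 3 <= rlim f x - rlim l x <= f c - l c + delta / 3.
Proof.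
move=> osc a0 /andP[ax xb] cin; have x0 := le_trans a0 (ltW ax).
have near_c : \forall z \near x^'+,
    f c - l c - delta / 3 <= (f \- l) z <= f c - l c + delta / 3.
  near=> z; rewrite -ler_distlC; apply/ltW/osc => //; apply/andP; split.
    by apply: lt_trans ax _; near: z; exact: nbhs_right_gt.
  by near: z; exact: nbhs_right_lt.
have hx := regulated_cvgr (regulatedB rf rl) x0.
rewrite -rlimB //; apply/andP; split.
  by apply: limr_ge hx _; apply: filterS near_c => z /andP[].
by apply: limr_le hx _; apply: filterS near_c => z /andP[].
Unshelve. all: by end_near.
Qed.

Let G_ge_small_osc a b r c : small_osc a b -> 0 <= a -> a < r < b -> a < c < b ->
  f c - l c - delta / 3 <= G r.
Proof.
move=> osc a0 rin cin; have /andP[le_rlim _] := small_osc_rlim osc a0 rin cin.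
have := osc c r cin rin; rewrite ltr_distlC => /andP[lt_r _].
by rewrite le_max le_min (ltW lt_r) le_rlim.
Qed.

Let A_le_small_osc a b s c :
  small_osc a b -> 0 <= a -> b <= T -> a < s < b -> a < c < b ->
  A s <= Num.max (f c - l c - 2 * delta / 3) 0.
Proof.
move=> osc a0 bT sin cin; have /andP[a_s sb] := sin.
have s0 := le_trans a0 (ltW a_s).
have sT : 0 <= s <= T by rewrite s0 (le_trans (ltW sb) bT).
have := delta_le sT.
have := delta_le_rlim s0 (lt_le_trans sb bT).
have /andP[_ ?] := small_osc_rlim osc a0 sin cin.
have := osc c s cin sin; rewrite ltr_distlC => /andP[_ ?] ? ?.
by rewrite !ge_max !le_max lexx !orbT andbT; apply/andP; split; apply/orP; left; lra.
Qed.

Let Theta_quasiconcave a b : small_osc a b -> 0 <= a -> b <= T ->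
  forall p q r, a < p -> p < q -> q < r -> r < b ->
  Num.min (Theta u l f p) (Theta u l f r) <= Theta u l f q.
Proof.
move=> osc a0 bT p q r ap pq qr rb.
rewrite leNgt lt_min; apply/negP => /andP[lt_qp lt_qr].
have pqT : 0 <= p <= q by apply/andP; split; lra.
have qrT : 0 <= q <= r by apply/andP; split; lra.
have [rT qT] : r <= T /\ q <= T by split; lra.
have d3 : 0 < delta / 3 by have := delta_gt0; lra.
have [s /andP[qs sr] lt_As] := Theta_rise qrT rT lt_qr.
have [r' /andP[pr' r'q] lt_Gr'] := Theta_fall pqT qT lt_qp d3.
have q_ab : a < q < b by apply/andP; split; lra.
have s_ab : a < s < b by apply/andP; split; lra.
have r'_ab : a < r' < b by apply/andP; split; lra.
have Theta_q0 : 0 <= Theta u l f q by apply: Theta_ge0; apply/andP; split; lra.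
have := lt_le_trans lt_As (A_le_small_osc osc a0 bT s_ab q_ab).
rewrite lt_max (ltNge _ 0) Theta_q0 orbF.
have := G_ge_small_osc osc a0 r'_ab q_ab.
lra.
Qed.

Let Theta_bounded_variation_small_osc a b :
  small_osc a b -> 0 <= a -> a <= b -> b <= T -> bounded_variation a b (Theta u l f).
Proof.
move=> osc a0; rewrite le_eqVlt => /predU1P[<- _|ab bT]; first exact: bounded_variationxx.
apply: (quasiconcave_bounded_variation (Theta_quasiconcave osc a0 bT) ab (M := M)).
move=> z /andP[az zb]; have zT : 0 <= z <= T by rewrite (le_trans a0 az) (le_trans zb bT).
by rewrite ger0_norm ?Theta_ge0 ?Theta_le.
Qed.

Lemma Theta_bounded_variation_segment : 0 <= T -> bounded_variation 0 T (Theta u l f).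
Proof.
move=> T0.
apply: (segment_induction (P := fun a b => bounded_variation a b (Theta u l f)))
  => // [a b c|x /andP[x0 _]|x /andP[x0 xT]].
- exact: bounded_variation_cat.
- have [e e0 osc] := small_osc_right x0; exists e => // b /andP[xb bxe] bT.
  have {}osc := small_osc_sub (lexx x) (ltW bxe) osc.
  exact: Theta_bounded_variation_small_osc osc x0 xb bT.
- have [e e0 osc] := small_osc_left x0; exists e => // a a0 /andP[xea ax].
  have {}osc := small_osc_sub (ltW xea) (lexx x) osc.
  exact: Theta_bounded_variation_small_osc osc a0 ax xT.
Qed.

End on_segment.

Lemma Theta_has_BV :
  (forall t, 0 <= t -> 0 < inf [set u s - l s | s in `[0, t]]) -> has_BV (Theta u l f).
Proof.
move=> ul_pos T T0.
have [C uC] := regulated_bounded_rlim (regulatedB ru rl) T0.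
have [M fuM] := regulated_bounded_rlim (regulatedB rf ru) T0.
apply: (Theta_bounded_variation_segment (M := M)
  (delta := inf [set u s - l s | s in `[0, T]])) => //.
- move=> s /[dup] /andP[s0 _] /fuM[].
  rewrite /= rlimB // !ler_norml => /andP[? ?] /andP[? ?].
  by rewrite /A !ge_max; apply/andP; split; [apply/andP; split|]; lra.
- exact: ul_pos.
- move=> s sT; apply: (ge_inf_img (B := - C)) => [z|]; last by rewrite /= in_itv.
  by rewrite /= in_itv /= => /uC[]; rewrite ler_norml => /andP[].
Qed.

End Theta.

Theorem lemma2 (R : realType) (y l u : R -> R) :
  regulated y -> regulated l -> regulated u ->
  (forall t : R, 0 <= t -> l t <= u t) ->
  l 0 <= y 0 -> y 0 <= u 0 ->
  (forall t : R, 0 <= t -> 0 < inf [set u s - l s | s in `[0, t]]) ->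
  has_BV (Theta u l (RP_xi y l)).
Proof.
move=> ry rl ru _ _ _ ul_pos.
exact: Theta_has_BV (RP_xi_regulated ry rl) rl ru (RP_xi_ge ry rl) ul_pos.
Qed.
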